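(* Let $a<b$ and let $H\subseteq\mathbb{R}^2$ be a functionally connected set such that $[a,b]\subseteq\mathrm{pr}_1[H]$. Let $h\colon[a,b]\to\mathbb{R}$ be a continuous function whose graph is included in $H$, and let $u,v\in\mathbb{R}$ be such that $(a,u),(b,v)\in H$. Then for every open interval $J$ such that $u,v\in J$ and $\mathrm{rng}(h)\subseteq J$, there exists a continuous function $g\colon[a,b]\to J$ whose graph is included in $H$, with $g(a)=u$ and $g(b)=v$.
   Context: $\mathrm{pr}_1[H]$ is the projection of $H$ to the first coordinate. A set $H\subseteq\mathbb{R}^2$ is functionally connected if for any two points $(x_1,y_1),(x_2,y_2)\in H$ with $x_1\neq x_2$ there exists a continuous function $h$ on the closed interval with endpoints $x_1,x_2$ such that $h(x_1)=y_1$, $h(x_2)=y_2$, and the graph of $h$ is included in $H$. *)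

From Stdlib Require Import Reals.
From Coquelicot Require Import Rbar.
Open Scope R_scope.

Definition continuous_on_cc (h : R -> R) (a b : R) : Prop :=
  forall x, a <= x <= b ->
    forall eps, 0 < eps -> exists delta, 0 < delta /\
      forall y, a <= y <= b -> Rabs (y - x) < delta -> Rabs (h y - h x) < eps.

Definition graph_in (h : R -> R) (a b : R) (H : R -> R -> Prop) : Prop :=
  forall x, a <= x <= b -> H x (h x).

Definition functionally_connected (H : R -> R -> Prop) : Prop :=
  forall x1 y1 x2 y2, H x1 y1 -> H x2 y2 -> x1 <> x2 ->
    exists h : R -> R,
      continuous_on_cc h (Rmin x1 x2) (Rmax x1 x2) /\
      h x1 = y1 /\ h x2 = y2 /\
      graph_in h (Rmin x1 x2) (Rmax x1 x2) H.

Definition pr1 (H : R -> R -> Prop) (x : R) : Prop := exists y, H x y.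

Definition in_open_interval (c d : Rbar) (y : R) : Prop :=
  Rbar_lt c (Finite y) /\ Rbar_lt (Finite y) d.

(** Write J for the open interval (c, d). A path of [H] starting at (a, u)
    stays in J on some [a, x1]. Let k be a path of [H] from (a, u) to
    (x1, h x1); the pointwise median of the first path, [h] and k is
    continuous, its value at each x is the ordinate of a point of [H] above x,
    and it lies between two values in J, hence in J; it equals u at a and h x1
    at x1. The same is done near b, and [h] is kept in between. *)

From Stdlib Require Import Reals Lra.
From Coquelicot Require Import Rbar Rcomplements.
Open Scope R_scope.

Lemma Rmax_lipschitz x y x' y' :
  Rabs (Rmax x y - Rmax x' y') <= Rmax (Rabs (x - x')) (Rabs (y - y')).
Proof.
  pose proof (Rmax_l (Rabs (x - x')) (Rabs (y - y'))) as Hx.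
  pose proof (Rmax_r (Rabs (x - x')) (Rabs (y - y'))) as Hy.
  revert Hx Hy; generalize (Rmax (Rabs (x - x')) (Rabs (y - y'))); intros M Hx Hy.
  apply Rabs_le_between in Hx, Hy; apply Rabs_le_between.
  unfold Rmax; destruct (Rle_dec x y), (Rle_dec x' y'); lra.
Qed.

Lemma Rmin_lipschitz x y x' y' :
  Rabs (Rmin x y - Rmin x' y') <= Rmax (Rabs (x - x')) (Rabs (y - y')).
Proof.
  pose proof (Rmax_l (Rabs (x - x')) (Rabs (y - y'))) as Hx.
  pose proof (Rmax_r (Rabs (x - x')) (Rabs (y - y'))) as Hy.
  revert Hx Hy; generalize (Rmax (Rabs (x - x')) (Rabs (y - y'))); intros M Hx Hy.
  apply Rabs_le_between in Hx, Hy; apply Rabs_le_between.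
  unfold Rmin; destruct (Rle_dec x y), (Rle_dec x' y'); lra.
Qed.

Lemma continuous_on_cc_lipschitz2 (phi : R -> R -> R) f g a b :
  (forall x y x' y', Rabs (phi x y - phi x' y') <= Rmax (Rabs (x - x')) (Rabs (y - y'))) ->
  continuous_on_cc f a b -> continuous_on_cc g a b ->
  continuous_on_cc (fun t => phi (f t) (g t)) a b.
Proof.
  intros Hphi Hf Hg x Hx eps Heps.
  destruct (Hf x Hx eps Heps) as [df [Hdf Pf]].
  destruct (Hg x Hx eps Heps) as [dg [Hdg Pg]].
  exists (Rmin df dg); split; [now apply Rmin_case|].
  intros y Hy Hyx.
  pose proof (Rmin_l df dg); pose proof (Rmin_r df dg).
  eapply Rle_lt_trans; [apply Hphi|].
  apply Rmax_lub_lt; [apply Pf | apply Pg]; auto; lra.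
Qed.

Lemma continuous_on_cc_subinterval f a b a' b' :
  continuous_on_cc f a b -> a <= a' -> b' <= b -> continuous_on_cc f a' b'.
Proof.
  intros Hf Ha Hb x Hx eps Heps.
  destruct (Hf x ltac:(lra) eps Heps) as [delta [Hdelta P]].
  exists delta; split; [exact Hdelta|].
  intros y Hy; apply P; lra.
Qed.

Lemma continuous_on_cc_glue g1 g2 a m b :
  continuous_on_cc g1 a m -> continuous_on_cc g2 m b -> g1 m = g2 m ->
  continuous_on_cc (fun t => if Rle_dec t m then g1 t else g2 t) a b.
Proof.
  intros C1 C2 E x Hx eps Heps.
  destruct (Rtotal_order x m) as [Hxm|[<-|Hxm]].
  - destruct (C1 x ltac:(lra) eps Heps) as [delta [Hdelta P]].
    exists (Rmin delta (m - x)); split; [apply Rmin_case; lra|].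
    intros y Hy Hyx.
    pose proof (Rmin_l delta (m - x)); pose proof (Rmin_r delta (m - x)).
    apply Rabs_lt_between' in Hyx as Hyx'.
    destruct (Rle_dec y m), (Rle_dec x m); try lra.
    apply P; lra.
  - destruct (C1 x ltac:(lra) eps Heps) as [d1 [Hd1 P1]].
    destruct (C2 x ltac:(lra) eps Heps) as [d2 [Hd2 P2]].
    exists (Rmin d1 d2); split; [apply Rmin_case; lra|].
    intros y Hy Hyx.
    pose proof (Rmin_l d1 d2); pose proof (Rmin_r d1 d2).
    destruct (Rle_dec y x), (Rle_dec x x); try lra.
    + apply P1; lra.
    + rewrite E; apply P2; lra.
  - destruct (C2 x ltac:(lra) eps Heps) as [delta [Hdelta P]].
    exists (Rmin delta (x - m)); split; [apply Rmin_case; lra|].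
    intros y Hy Hyx.
    pose proof (Rmin_l delta (x - m)); pose proof (Rmin_r delta (x - m)).
    apply Rabs_lt_between' in Hyx as Hyx'.
    destruct (Rle_dec y m), (Rle_dec x m); try lra.
    apply P; lra.
Qed.

Lemma in_open_interval_between c d y1 y2 z :
  in_open_interval c d y1 -> in_open_interval c d y2 -> y1 <= z <= y2 ->
  in_open_interval c d z.
Proof.
  unfold in_open_interval; destruct c, d; simpl; intuition lra.
Qed.

Lemma in_open_interval_nbhd c d y : in_open_interval c d y ->
  exists e, 0 < e /\ forall z, Rabs (z - y) < e -> in_open_interval c d z.
Proof.
  intros [Hc Hd].
  exists (Rmin (match c with Finite c => y - c | _ => 1 end)
               (match d with Finite d => d - y | _ => 1 end)).
  destruct c as [c| |], d as [d| |]; simpl in Hc, Hd |- *; try contradiction;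
    (split; [apply Rmin_case; lra|]);
    intros z Hz; apply Rabs_lt_between' in Hz;
    match type of Hz with context [Rmin ?p ?q] =>
      pose proof (Rmin_l p q); pose proof (Rmin_r p q) end;
    split; simpl; first [exact I | lra].
Qed.

Lemma continuous_on_cc_in_open_interval_near f a b x c d :
  continuous_on_cc f a b -> a <= x <= b -> in_open_interval c d (f x) ->
  exists delta, 0 < delta /\
    forall y, a <= y <= b -> Rabs (y - x) < delta -> in_open_interval c d (f y).
Proof.
  intros Cf Hx Jfx.
  destruct (in_open_interval_nbhd c d (f x) Jfx) as [e [He Pe]].
  destruct (Cf x Hx e He) as [delta [Hdelta P]].
  exists delta; split; [exact Hdelta|].
  intros y Hy Hyx; apply Pe, P; assumption.
Qed.

Definition median (x y z : R) : R := Rmax (Rmin x y) (Rmin (Rmax x y) z).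

Lemma median_case (P : R -> Prop) x y z : P x -> P y -> P z -> P (median x y z).
Proof.
  intros Px Py Pz; unfold median.
  apply Rmax_case; [apply Rmin_case|apply Rmin_case; [apply Rmax_case|]]; assumption.
Qed.

Lemma median_bounds x y z : Rmin x y <= median x y z <= Rmax x y.
Proof.
  unfold median; split; [apply Rmax_l|].
  apply Rmax_lub; [|apply Rmin_l].
  apply Rle_trans with x; [apply Rmin_l|apply Rmax_l].
Qed.

Lemma median_id x y z : Rmin x y <= z <= Rmax x y -> median x y z = z.
Proof.
  intros Hz; unfold median.
  rewrite (Rmin_right (Rmax x y) z) by lra; apply Rmax_right; lra.
Qed.

Lemma continuous_on_cc_median f g k a b :
  continuous_on_cc f a b -> continuous_on_cc g a b -> continuous_on_cc k a b ->
  continuous_on_cc (fun t => median (f t) (g t) (k t)) a b.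
Proof.
  intros Cf Cg Ck; unfold median.
  apply (continuous_on_cc_lipschitz2 Rmax); [apply Rmax_lipschitz| |].
  - apply (continuous_on_cc_lipschitz2 Rmin); [apply Rmin_lipschitz|assumption|assumption].
  - apply (continuous_on_cc_lipschitz2 Rmin); [apply Rmin_lipschitz| |assumption].
    apply (continuous_on_cc_lipschitz2 Rmax); [apply Rmax_lipschitz|assumption|assumption].
Qed.

Definition selection (H : R -> R -> Prop) (c d : Rbar) (g : R -> R) (s t : R) : Prop :=
  continuous_on_cc g s t /\ graph_in g s t H /\
  forall x, s <= x <= t -> in_open_interval c d (g x).

Lemma selection_subinterval H c d g s t s' t' :
  selection H c d g s t -> s <= s' -> t' <= t -> selection H c d g s' t'.
Proof.
  intros [Cg [Gg Jg]] Hs Ht; split; [|split].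
  - exact (continuous_on_cc_subinterval g s t s' t' Cg Hs Ht).
  - intros x Hx; apply Gg; lra.
  - intros x Hx; apply Jg; lra.
Qed.

Lemma selection_glue H c d g1 g2 s m t :
  selection H c d g1 s m -> selection H c d g2 m t -> g1 m = g2 m ->
  selection H c d (fun x => if Rle_dec x m then g1 x else g2 x) s t.
Proof.
  intros [C1 [G1 J1]] [C2 [G2 J2]] E; split; [|split].
  - exact (continuous_on_cc_glue g1 g2 s m t C1 C2 E).
  - intros x Hx; destruct (Rle_dec x m); [apply G1|apply G2]; lra.
  - intros x Hx; destruct (Rle_dec x m); [apply J1|apply J2]; lra.
Qed.

Lemma selection_crossover H c d f h s t ys yt :
  functionally_connected H -> s < t ->
  selection H c d f s t -> selection H c d h s t ->
  (ys = f s \/ ys = h s) -> (yt = f t \/ yt = h t) ->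
  exists g, selection H c d g s t /\ g s = ys /\ g t = yt.
Proof.
  intros hH hst [Cf [Gf Jf]] [Ch [Gh Jh]] Hys Hyt.
  assert (Hs : H s ys) by (destruct Hys as [->| ->]; [apply Gf|apply Gh]; lra).
  assert (Ht : H t yt) by (destruct Hyt as [->| ->]; [apply Gf|apply Gh]; lra).
  destruct (hH s ys t yt Hs Ht ltac:(lra)) as [k [Ck [ks [kt Gk]]]].
  rewrite Rmin_left, Rmax_right in Ck, Gk by lra.
  assert (Hend : forall x y, y = f x \/ y = h x -> Rmin (f x) (h x) <= y <= Rmax (f x) (h x)).
  { intros x y [->| ->]; split; auto using Rmin_l, Rmin_r, Rmax_l, Rmax_r. }
  exists (fun x => median (f x) (h x) (k x)); split; [split; [|split]|split].
  - apply continuous_on_cc_median; assumption.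
  - intros x Hx; apply median_case; [apply Gf|apply Gh|apply Gk]; exact Hx.
  - intros x Hx; apply in_open_interval_between with (Rmin (f x) (h x)) (Rmax (f x) (h x)).
    + apply Rmin_case; auto.
    + apply Rmax_case; auto.
    + apply median_bounds.
  - rewrite ks; apply median_id, Hend, Hys.
  - rewrite kt; apply median_id, Hend, Hyt.
Qed.

Lemma selection_patch_left H c d h a b u :
  functionally_connected H -> a < b -> selection H c d h a b ->
  H a u -> in_open_interval c d u ->
  exists x1, a < x1 <= (a + b) / 2 /\
    exists g, selection H c d g a x1 /\ g a = u /\ g x1 = h x1.
Proof.
  intros hH hab Sh hu uJ.
  pose proof Sh as [_ [Gh _]].
  destruct (hH a u b (h b) hu (Gh b ltac:(lra)) ltac:(lra))
    as [f [Cf [fa [_ Gf]]]].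
  rewrite Rmin_left, Rmax_right in Cf, Gf by lra.
  destruct (continuous_on_cc_in_open_interval_near f a b a c d Cf ltac:(lra)
              ltac:(rewrite fa; exact uJ)) as [delta [Hdelta Jf]].
  assert (Hx1 : a < Rmin (a + delta / 2) ((a + b) / 2))
    by (apply Rmin_glb_lt; lra).
  pose proof (Rmin_l (a + delta / 2) ((a + b) / 2)).
  pose proof (Rmin_r (a + delta / 2) ((a + b) / 2)).
  set (x1 := Rmin (a + delta / 2) ((a + b) / 2)) in *.
  exists x1; split; [lra|].
  apply (selection_crossover H c d f h a x1); auto; try lra.
  - split; [|split].
    + apply (continuous_on_cc_subinterval f a b); [exact Cf|lra|lra].
    + intros x Hx; apply Gf; lra.
    + intros x Hx; apply Jf; [lra|apply Rabs_lt_between'; lra].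
  - apply (selection_subinterval H c d h a b); [exact Sh|lra|lra].
Qed.

Lemma selection_patch_right H c d h a b v :
  functionally_connected H -> a < b -> selection H c d h a b ->
  H b v -> in_open_interval c d v ->
  exists x2, (a + b) / 2 <= x2 < b /\
    exists g, selection H c d g x2 b /\ g x2 = h x2 /\ g b = v.
Proof.
  intros hH hab Sh hv vJ.
  pose proof Sh as [_ [Gh _]].
  destruct (hH a (h a) b v (Gh a ltac:(lra)) hv ltac:(lra))
    as [f [Cf [_ [fb Gf]]]].
  rewrite Rmin_left, Rmax_right in Cf, Gf by lra.
  destruct (continuous_on_cc_in_open_interval_near f a b b c d Cf ltac:(lra)
              ltac:(rewrite fb; exact vJ)) as [delta [Hdelta Jf]].
  assert (Hx2 : Rmax (b - delta / 2) ((a + b) / 2) < b)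
    by (apply Rmax_lub_lt; lra).
  pose proof (Rmax_l (b - delta / 2) ((a + b) / 2)).
  pose proof (Rmax_r (b - delta / 2) ((a + b) / 2)).
  set (x2 := Rmax (b - delta / 2) ((a + b) / 2)) in *.
  exists x2; split; [lra|].
  apply (selection_crossover H c d f h x2 b); auto; try lra.
  - split; [|split].
    + apply (continuous_on_cc_subinterval f a b); [exact Cf|lra|lra].
    + intros x Hx; apply Gf; lra.
    + intros x Hx; apply Jf; [lra|apply Rabs_lt_between'; lra].
  - apply (selection_subinterval H c d h a b); [exact Sh|lra|lra].
Qed.

Theorem lemma4p3 (a b : R) (H : R -> R -> Prop) (h : R -> R) (u v : R)
  (hab : a < b)
  (hH : functionally_connected H)
  (hpr : forall x, a <= x <= b -> pr1 H x)
  (hcont : continuous_on_cc h a b)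
  (hgraph : graph_in h a b H)
  (hu : H a u) (hv : H b v) :
  forall c d : Rbar,
    in_open_interval c d u -> in_open_interval c d v ->
    (forall x, a <= x <= b -> in_open_interval c d (h x)) ->
    exists g : R -> R,
      continuous_on_cc g a b /\
      (forall x, a <= x <= b -> in_open_interval c d (g x)) /\
      graph_in g a b H /\ g a = u /\ g b = v.
Proof.
  intros c d uJ vJ hJ.
  assert (Sh : selection H c d h a b) by (split; [|split]; assumption).
  destruct (selection_patch_left H c d h a b u hH hab Sh hu uJ)
    as [x1 [Hx1 [g1 [S1 [g1a g1x1]]]]].
  destruct (selection_patch_right H c d h a b v hH hab Sh hv vJ)
    as [x2 [Hx2 [g2 [S2 [g2x2 g2b]]]]].
  set (g23 := fun x => if Rle_dec x x2 then h x else g2 x).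
  set (g := fun x => if Rle_dec x x1 then g1 x else g23 x).
  assert (Sg : selection H c d g a b).
  { apply (selection_glue H c d g1 g23 a x1 b); [exact S1| |].
    - apply selection_glue; [apply (selection_subinterval H c d h a b)|exact S2|];
        auto; lra.
    - unfold g23; destruct (Rle_dec x1 x2); [auto|lra]. }
  destruct Sg as [Cg [Gg Jg]].
  exists g; split; [|split; [|split; [|split]]]; auto.
  - unfold g; destruct (Rle_dec a x1); [auto|lra].
  - unfold g, g23; destruct (Rle_dec b x1), (Rle_dec b x2); auto; lra.
Qed.
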